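(* Let $\Omega$ be a discrete filtered set with upper closure $\tilde\Omega$. Then the closure $\overline{\mathcal{S}_\Omega}$ of $\mathcal{S}_\Omega$ in $\mathbb{R}\times\mathbb{C}$ equals $\mathcal{S}_{\tilde\Omega}$, and $\mathcal{M}_\Omega=\mathcal{M}_{\tilde\Omega}$.
   Context: A discrete filtered set (d.f.s.) is a family $\Omega=(\Omega_L)_{L\in\mathbb{R}_{\ge0}}$ of finite subsets of $\mathbb{C}$ with $\Omega_{L_1}\subseteq\Omega_{L_2}$ for $L_1\le L_2$ and $\Omega_\delta=\emptyset$ for some $\delta>0$. Its upper closure is $\tilde\Omega_L=\bigcap_{\varepsilon>0}\Omega_{L+\varepsilon}$ ($L\ge0$), which is again a d.f.s. For a d.f.s. $\Omega$ set $\mathcal{S}_\Omega=\{(\lambda,\omega)\in\mathbb{R}\times\mathbb{C}\mid \lambda\ge0,\ \omega\in\Omega_\lambda\}$ and $\mathcal{M}_\Omega=(\mathbb{R}\times\mathbb{C})\setminus\overline{\mathcal{S}_\Omega}$, where the bar denotes closure in $\mathbb{R}\times\mathbb{C}$. *)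

(* C is modelled as R * R (real and imaginary parts),
   with the product topology, which is the usual topology of C. *)
From HB Require Import structures.
From mathcomp Require Import all_boot all_order all_algebra.
From mathcomp Require Import all_classical all_reals all_analysis.
Set Implicit Arguments. Unset Strict Implicit. Unset Printing Implicit Defensive.
Import Order.TTheory GRing.Theory Num.Theory.
Import numFieldNormedType.Exports.
Local Open Scope classical_set_scope.
Local Open Scope ring_scope.

Notation cplx R := (R * R)%type.

(* A discrete filtered set: values for L < 0 are irrelevant. *)
Definition is_dfs (R : realType) (Om : R -> set (cplx R)) : Prop :=
  (forall L, 0 <= L -> finite_set (Om L)) /\
  (forall L1 L2, 0 <= L1 -> L1 <= L2 -> Om L1 `<=` Om L2) /\
  (exists delta : R, 0 < delta /\ Om delta = set0).

Definition upper_closure (R : realType) (Om : R -> set (cplx R)) : R -> set (cplx R) :=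
  fun L => \bigcap_(e in [set e : R | 0 < e]) Om (L + e).

Definition S_set (R : realType) (Om : R -> set (cplx R)) : set (R * (R * R))%type :=
  [set p | 0 <= p.1 /\ Om p.1 p.2].

Definition M_set (R : realType) (Om : R -> set (cplx R)) : set (R * (R * R))%type :=
  ~` @closure (R * (R * R))%type (S_set Om).

From HB Require Import structures.
From mathcomp Require Import all_boot all_order all_algebra.
From mathcomp Require Import all_classical all_reals all_analysis.
Import Order.TTheory GRing.Theory Num.Theory.
Import numFieldNormedType.Exports.
Local Open Scope classical_set_scope.
Local Open Scope ring_scope.

(* A point (l, w) of R x C is approached by (l + e/2, w), which lies in S_Om
   whenever w is in the upper closure at l.  Conversely, near a limit point
   (l, w) of S_Om every point of S_Om has first coordinate below l + e, hence
   second coordinate in Om_(l+e) by monotonicity; this set is finite, hence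
   closed, so it contains w. *)

Section ClosureOfS.
Variables (R : realType) (Om : R -> set (cplx R)).

Lemma closure_S_set_ge0 :
  topology_structure.closure (S_set Om) `<=` [set p | 0 <= p.1].
Proof.
move=> [l w] cl /=; rewrite leNgt; apply/negP => l_lt0.
have : nbhs (l, w) ([set x : R | x < 0] `*` [set: cplx R]).
  exists ([set x : R | x < 0], [set: cplx R]) => //=.
  by split; [exact: lt_nbhsl | exact: filterT].
move=> /cl [[m v]] [[m_ge0 _] [/= m_lt0 _]].
by move: (le_lt_trans m_ge0 m_lt0); rewrite ltxx.
Qed.

Lemma closure_S_set_sub_upper_closure :
  (forall L, 0 < L -> closed (Om L)) ->
  (forall L1 L2, 0 <= L1 -> L1 <= L2 -> Om L1 `<=` Om L2) ->
  topology_structure.closure (S_set Om) `<=` S_set (upper_closure Om).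
Proof.
move=> Om_closed Om_mono [l w] cl.
have l_ge0 := closure_S_set_ge0 (l, w) cl.
split => //= e e_gt0; apply: contrapT => w_notin.
have : nbhs (l, w) ([set x : R | x < l + e] `*` ~` Om (l + e)).
  exists ([set x : R | x < l + e], ~` Om (l + e)) => //; split.
    by apply: lt_nbhsl; rewrite ltrDl.
  apply: open_nbhs_nbhs; split => //; apply: closed_openC.
  by apply: Om_closed; rewrite ltr_wpDl.
move=> /cl [[m v]] [[m_ge0 Omv] [/= m_lt v_notin]].
by apply: v_notin; apply: (Om_mono m) => //; exact: ltW.
Qed.

Lemma S_set_upper_closure_sub_closure :
  S_set (upper_closure Om) `<=` topology_structure.closure (S_set Om).
Proof.
move=> [l w] [/= l_ge0 w_in] B.
move=> [[A1 A2] /= [/nbhs_ballP [e /= e_gt0 e_ball] A2w] A12B].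
have e2_gt0 : 0 < e / 2 by rewrite divr_gt0.
exists (l + e / 2, w); split.
  by split => /=; [rewrite addr_ge0 // ltW | exact: (w_in (e / 2))].
apply: A12B; split => /=; last exact: nbhs_singleton.
apply: e_ball; rewrite /ball /= opprD addrA subrr add0r normrN gtr0_norm //.
by rewrite ltr_pdivrMr // ltr_pMr // ltr1n.
Qed.

End ClosureOfS.

Lemma dfs_closed (R : realType) (Om : R -> set (cplx R)) :
  is_dfs Om -> forall L, 0 <= L -> closed (Om L).
Proof.
move=> [Om_fin _] L L_ge0.
apply: (proj1 (@accessible_finite_set_closed (cplx R))); last exact: Om_fin.
exact/hausdorff_accessible/norm_hausdorff.
Qed.

Lemma M_set_eq (R : realType) (Om Om' : R -> set (cplx R)) :
  topology_structure.closure (S_set Om) = S_set Om' -> M_set Om = M_set Om'.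
Proof.
move=> clE; rewrite /M_set -clE; congr (~` _).
exact/closure_id/closed_closure.
Qed.

Theorem lemma2p4 (R : realType) (Om : R -> set (cplx R)) :
  is_dfs Om ->
  @topology_structure.closure (R * (R * R))%type (S_set Om) = S_set (upper_closure Om) /\
  M_set Om = M_set (upper_closure Om).
Proof.
move=> dfs; have [_ [Om_mono _]] := dfs.
have clE : topology_structure.closure (S_set Om) = S_set (upper_closure Om).
  apply/seteqP; split; last exact: S_set_upper_closure_sub_closure.
  apply: closure_S_set_sub_upper_closure => // L L_gt0.
  exact: dfs_closed dfs L (ltW L_gt0).
by split => //; exact: M_set_eq.
Qed.
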